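(* Let $\mathbb A$ be the $Q$-MCR algebra described in the context. Assume that $\widetilde Q(x_1,x_2)$ is invertible for all $(x_1,x_2)\in X^2$ and that there is $\varkappa\in\mathbb R$ with $\operatorname{Tr}(\widetilde Q(x,x)^{-1}v^{(2)})=\varkappa\operatorname{Tr}v^{(2)}$ for all $x\in X$, $v^{(2)}\in V^{\otimes2}$. Let $\sharp_1,\dots,\sharp_n\in\{+,-\}$ with $\sharp_i=+$, $\sharp_{i+1}=-$ for some $i\in\{1,\dots,n-1\}$. Then for all $f^{(n)}\in\mathfrak F^{(n)}$, $$\Phi(f^{(n)};\sharp_1,\dots,\sharp_n)=\Phi\big(\widetilde Q_i(x_i,x_{i+1})^{-1}f^{(n)}(x_1,\dots,x_{i+1},x_i,\dots,x_n);\sharp_1,\dots,\sharp_{i+1},\sharp_i,\dots,\sharp_n\big)-\varkappa\,\Phi(g^{(n-2)};\sharp_1,\dots,\sharp_{i-1},\sharp_{i+2},\dots,\sharp_n),$$ where $g^{(n-2)}(x_1,\dots,x_{n-2})=\int_X\operatorname{Tr}_if^{(n)}(x_1,\dots,x_{i-1},x,x,x_i,\dots,x_{n-2})\,dx$.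
   Context: Let $d\ge2$, $X=\mathbb R^d$, $x=(y,z)$ with $y\in Y:=\mathbb R$, $z\in Z:=\mathbb R^{d-1}$. $V=\mathbb C^r$ with standard basis $e_1,\dots,e_r$, $J$ complex conjugation, $\langle u,v\rangle_{V^{\otimes n}}:=(u,Jv)$. $Q:Y^2\to\mathcal L(V^{\otimes2})$ continuous, unitary-valued, $Q(y_1,y_2)^*=Q(y_2,y_1)$, satisfying $Q_1(y_1,y_2)Q_2(y_1,y_3)Q_1(y_2,y_3)=Q_2(y_2,y_3)Q_1(y_1,y_3)Q_2(y_1,y_2)$, where $C_i$ is $C\in\mathcal L(V^{\otimes2})$ acting on factors $i,i+1$. $Q(x_1,x_2):=Q(y_1,y_2)$. $\mathbb S^{(n)}(v_1\otimes\cdots\otimes v_n)=Jv_n\otimes\cdots\otimes Jv_1$ (antilinear); $\widehat Q(x_1,x_2)=\mathbb S^{(2)}Q(x_2,x_1)\mathbb S^{(2)}$; $\langle\widetilde Q(x_1,x_2)e_i\otimes e_j,e_k\otimes e_l\rangle=\langle Q(x_1,x_2)e_k\otimes e_i,e_l\otimes e_j\rangle$. $\operatorname{Tr}(v)=\sum_k(v,e_k\otimes e_k)$ on $V^{\otimes2}$, $\operatorname{Tr}_i$ applies it to factors $i,i+1$ of $V^{\otimes n}$. $\mathcal G=L^2(Z)$; $\mathfrak F^{(n)}$ is the span of $\varphi(y_1..y_n)g_1(z_1)\cdots g_n(z_n)$, $\varphi\in C_0(Y^n;V^{\otimes n})$, $g_i\in\mathcal G$. $\mathbb A$ is the unital $*$-algebra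 spanned by $\mathbf 1$ and $\Phi(f^{(n)};\sharp_1..\sharp_n)$, linear in $f^{(n)}\in\mathfrak F^{(n)}$, with product given by tensoring kernels and concatenating signs, involution $\Phi(f;\sharp_1..\sharp_n)^*=\Phi(\mathbb S^{(n)}f(x_n..x_1);-\sharp_n..-\sharp_1)$, and relations: for $\sharp_i=\sharp_{i+1}=+$: $\Phi(f;\sharp)=\Phi(Q_i(x_i,x_{i+1})f(..,x_{i+1},x_i,..);\sharp)$; for $\sharp_i=\sharp_{i+1}=-$: same with $\widehat Q_i(x_i,x_{i+1})$; for $\sharp_i=-,\sharp_{i+1}=+$: $\Phi(f;\sharp)=\Phi(\widetilde Q_i(x_{i+1},x_i)f(..,x_{i+1},x_i,..);\sharp_1..\sharp_{i+1},\sharp_i..\sharp_n)+\Phi(g^{(n-2)};\sharp_1..\sharp_{i-1},\sharp_{i+2}..\sharp_n)$ with $g^{(n-2)}$ as in the claim. *)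

From HB Require Import structures.
From mathcomp Require Import all_boot all_order all_algebra.
From mathcomp Require Import all_classical all_reals all_analysis.
From mathcomp.real_closed Require Import complex.
Import Order.TTheory GRing.Theory Num.Theory.
Import numFieldNormedType.Exports.
Set Implicit Arguments.
Unset Strict Implicit.
Unset Printing Implicit Defensive.
Local Open Scope ring_scope.

(* Y := R, Z := R^(d-1) (as (d.-1).-tuple R, with its product sigma-algebra), *)
(* X := Y * Z.  V := C^r with standard basis indexed by 'I_r.                 *)
(* A vector of V^{(x)n} is its coefficient function ('I_n -> 'I_r) -> C.      *)
(* An operator on V (x) V is its matrix  A (k,l) (i,j) = <A e_i(x)e_j, e_k(x)e_l>,*)
(* i.e. the coefficient of e_k (x) e_l in A (e_i (x) e_j).                    *)
(* Points of X^n are functions 'I_n -> X (position 0 is x_1).                *)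

Section QMCR.
Variables (R : realType) (d r : nat).

Definition reC (z : R[i]) : R := complex.Re z.
Definition imC (z : R[i]) : R := complex.Im z.

Definition Zsp := (d.-1).-tuple R.
Definition Xsp := (R * Zsp)%type.
Definition tens (n : nat) := ('I_n -> 'I_r) -> R[i].
Definition kern (n : nat) := ('I_n -> Xsp) -> tens n.
Definition op2 := ('I_r * 'I_r)%type -> ('I_r * 'I_r)%type -> R[i].

Definition op_mul (A B : op2) : op2 :=
  fun p q => \sum_(u : 'I_r * 'I_r) A p u * B u q.
Definition op_id : op2 := fun p q => (p == q)%:R.
Definition op_adj (A : op2) : op2 := fun p q => conjc (A q p).
Definition op_app2 (A : op2) (v : ('I_r * 'I_r)%type -> R[i]) :
  ('I_r * 'I_r)%type -> R[i] := fun p => \sum_(u : 'I_r * 'I_r) A p u * v u.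
Definition trace2 (v : ('I_r * 'I_r)%type -> R[i]) : R[i] :=
  \sum_(k < r) v (k, k).

Definition nxt n (i : 'I_n) : 'I_n := insubd i i.+1.
Definition sw n (i : 'I_n) (k : 'I_n) : 'I_n :=
  if k == i then nxt i else if k == nxt i then i else k.
Definition upd n (T : Type) (t : 'I_n -> T) (i : 'I_n) (a : T) : 'I_n -> T :=
  fun k => if k == i then a else t k.
(* C_i : the operator C acting on the factors i, i+1 of V^{(x)n} *)
Definition op_at n (i : 'I_n) (A : op2) (t : tens n) : tens n :=
  fun idx => \sum_(u : 'I_r * 'I_r)
     A (idx i, idx (nxt i)) u * t (upd (upd idx i u.1) (nxt i) u.2).
Definition ext m (T : Type) (ys : 'I_m -> T) (v : T) (p : nat) : T :=
  if @insub _ (fun q => q < m)%N _ p is Some q then ys q else v.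
(* (y_1,..,y_{i-1}, v, v, y_i, .., y_m) with v in positions i, i+1 *)
Definition ins2 n m (T : Type) (i : 'I_n) (ys : 'I_m -> T) (v : T) : 'I_n -> T :=
  fun k => if (k < i)%N then ext ys v k
           else if (k <= i.+1)%N then v else ext ys v (k - 2).
(* removal of positions i, i+1 *)
Definition rem2 n (T : Type) (i : 'I_n) (s : 'I_n -> T) : 'I_(n - 2) -> T :=
  fun k => s (insubd i (if (k < i)%N then nat_of_ord k else k.+2)).
Definition Tr_at n (i : 'I_n) (t : tens n) : tens (n - 2) :=
  fun jdx => \sum_(k < r) t (ins2 i jdx k).

(* Lebesgue integration over Z = R^(d-1), written as an iterated integral *)
Fixpoint iintR (k : nat) : (k.-tuple R -> R) -> R :=
  match k return (k.-tuple R -> R) -> R with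
  | 0 => fun h => h [tuple]
  | k'.+1 => fun h =>
      Rintegral lebesgue_measure setT (fun t => iintR (fun z => h [tuple of t :: z]))
  end.
Fixpoint iintE (k : nat) : (k.-tuple R -> \bar R) -> \bar R :=
  match k return (k.-tuple R -> \bar R) -> \bar R with
  | 0 => fun h => h [tuple]
  | k'.+1 => fun h =>
      (\int[lebesgue_measure]_(t in setT) iintE (fun z => h [tuple of t :: z]))%E
  end.
Definition intX (F : Xsp -> R[i]) : R[i] :=
  Complex
   (Rintegral lebesgue_measure setT (fun y => iintR (fun z => reC (F (y, z)))))
   (Rintegral lebesgue_measure setT (fun y => iintR (fun z => imC (F (y, z))))).

Definition C0fun n (phi : 'rV[R]_n -> tens n) : Prop :=
  (forall idx, continuous (fun y => reC (phi y idx)) /\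
               continuous (fun y => imC (phi y idx))) /\
  compact (closure [set y | exists idx, phi y idx != 0]).
Definition L2Z (g : Zsp -> R[i]) : Prop :=
  measurable_fun setT (fun z => reC (g z)) /\
  measurable_fun setT (fun z => imC (g z)) /\
  (iintE (fun z => ((reC (g z)) ^+ 2 + (imC (g z)) ^+ 2)%:E) < +oo)%E.
Definition elem n (phi : 'rV[R]_n -> tens n) (gs : 'I_n -> Zsp -> R[i]) : kern n :=
  fun xs idx => phi (\row_k (xs k).1) idx * \prod_(k < n) gs k (xs k).2.
Definition Fspace n (f : kern n) : Prop :=
  exists (m : nat) (phis : 'I_m -> 'rV[R]_n -> tens n) (gss : 'I_m -> 'I_n -> Zsp -> R[i]),
    (forall j, C0fun (phis j) /\ forall k, L2Z (gss j k)) /\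
    f = (fun xs idx => \sum_(j < m) elem (phis j) (gss j) xs idx).

(* (x_1..x_n) |-> A(y_i, y_{i+1})_i f(x_1,..,x_{i+1},x_i,..,x_n) *)
Definition swapk n (i : 'I_n) (A : R -> R -> op2) (f : kern n) : kern n :=
  fun xs => op_at i (A (xs i).1 (xs (nxt i)).1) (f (fun k => xs (sw i k))).
(* g^(n-2)(x_1..x_{n-2}) = int_X Tr_i f(x_1..x_{i-1},x,x,x_i..x_{n-2}) dx *)
Definition gker n (i : 'I_n) (f : kern n) : kern (n - 2) :=
  fun ys jdx => intX (fun x => Tr_at i (f (ins2 i ys x)) jdx).
Definition ktens n m (f : kern n) (h : kern m) : kern (n + m) :=
  fun xs idx => f (fun k => xs (lshift m k)) (fun k => idx (lshift m k)) *
                h (fun k => xs (rshift n k)) (fun k => idx (rshift n k)).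
Definition scat n m (s : 'I_n -> bool) (t : 'I_m -> bool) : 'I_(n + m) -> bool :=
  fun k => match fintype.split k with inl a => s a | inr b => t b end.
Definition kstar n (f : kern n) : kern n :=
  fun xs idx => conjc (f (fun k => xs (rev_ord k)) (fun k => idx (rev_ord k))).
Definition sstar n (s : 'I_n -> bool) : 'I_n -> bool := fun k => ~~ s (rev_ord k).

Definition Qt (Q : R -> R -> op2) (y1 y2 : R) : op2 :=
  fun p q => Q y1 y2 (p.2, q.2) (p.1, q.1).
Definition Qhat (Q : R -> R -> op2) (y1 y2 : R) : op2 :=
  fun p q => conjc (Q y2 y1 (p.2, p.1) (q.2, q.1)).

Definition Q_assumptions (Q : R -> R -> op2) : Prop :=
  (forall a b, continuous (fun p : R * R => reC (Q p.1 p.2 a b)) /\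
               continuous (fun p : R * R => imC (Q p.1 p.2 a b))) /\
  (forall y1 y2, op_mul (op_adj (Q y1 y2)) (Q y1 y2) = op_id /\
                 op_mul (Q y1 y2) (op_adj (Q y1 y2)) = op_id) /\
  (forall y1 y2, op_adj (Q y1 y2) = Q y2 y1) /\
  (forall (y1 y2 y3 : R) (t : tens 3),
     op_at (@inord 2 0) (Q y1 y2) (op_at (@inord 2 1) (Q y1 y3)
       (op_at (@inord 2 0) (Q y2 y3) t)) =
     op_at (@inord 2 1) (Q y2 y3) (op_at (@inord 2 0) (Q y1 y3)
       (op_at (@inord 2 1) (Q y1 y2) t))).

Definition QMCR_model (Q : R -> R -> op2) (A : lalgType R[i]) (star : A -> A)
    (Phi : forall n, kern n -> ('I_n -> bool) -> A) : Prop :=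
  (forall a b : A, star (a + b) = star a + star b) /\
  (forall (c : R[i]) (a : A), star (c *: a) = conjc c *: star a) /\
  (forall a b : A, star (a * b) = star b * star a) /\
  (forall a : A, star (star a) = a) /\
  (forall n (f h : kern n) s (a b : R[i]), Fspace f -> Fspace h ->
     Phi n (fun xs idx => a * f xs idx + b * h xs idx) s = a *: Phi n f s + b *: Phi n h s) /\
  (forall (f : kern 0) s xs idx, Fspace f -> Phi 0 f s = f xs idx *: 1) /\
  (forall n m (f : kern n) (h : kern m) s t, Fspace f -> Fspace h ->
     Phi n f s * Phi m h t = Phi (n + m) (ktens f h) (scat s t)) /\
  (forall n (f : kern n) s, Fspace f -> star (Phi n f s) = Phi n (kstar f) (sstar s)) /\
  (forall n (i : 'I_n) (f : kern n) (s : 'I_n -> bool), (i.+1 < n)%N -> s i -> s (nxt i) -> Fspace f ->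
     Phi n f s = Phi n (swapk i Q f) (fun k => s (sw i k))) /\
  (forall n (i : 'I_n) (f : kern n) (s : 'I_n -> bool), (i.+1 < n)%N -> ~~ s i -> ~~ s (nxt i) -> Fspace f ->
     Phi n f s = Phi n (swapk i (Qhat Q) f) (fun k => s (sw i k))) /\
  (forall n (i : 'I_n) (f : kern n) (s : 'I_n -> bool), (i.+1 < n)%N -> ~~ s i -> s (nxt i) -> Fspace f ->
     Phi n f s = Phi n (swapk i (fun y1 y2 => Qt Q y2 y1) f) (fun k => s (sw i k))
                 + Phi (n - 2)%N (gker i f) (rem2 i s)).

End QMCR.

From mathcomp Require Import all_boot all_order all_algebra.
From mathcomp Require Import all_classical all_reals all_analysis.
From mathcomp.real_closed Require Import complex.
From mathcomp Require Import zify.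
Import Order.TTheory GRing.Theory Num.Theory.
Import numFieldNormedType.Exports.
Local Open Scope ring_scope.
Set Implicit Arguments.
Unset Strict Implicit.

(* Apply the (-,+) relation to h := swapk i Qtinv f, whose signs are those of
   f swapped at i, i+1.  Swapping h back with Qt(x_(i+1), x_i) returns f since
   Qt Qtinv = 1.  In the contraction kernel of h the two swapped arguments
   coincide, so Qtinv(x, x) acts alone on the factors i, i+1 and the trace
   hypothesis turns it into kappa: that kernel is the contraction kernel of
   kappa f.  Pulling kappa out of Phi there takes the (-,+) relation once
   more, for f and for kappa f.  Continuity of Qtinv, needed for h to lie in
   F^(n), comes from the adjugate formula. *)

Definition ccontinuous (R : realType) (T : topologicalType) (F : T -> R[i]) :=
  continuous (fun t => complex.Re (F t)) /\ continuous (fun t => complex.Im (F t)).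

Section ComplexContinuity.
Variables (R : realType) (T : topologicalType).
Implicit Types F G : T -> R[i].

Lemma ccontinuous_cst (c : R[i]) : ccontinuous (fun _ : T => c).
Proof. by split => t; apply: cst_continuous. Qed.

Lemma ccontinuousD F G : ccontinuous F -> ccontinuous G -> ccontinuous (F \+ G).
Proof.
move=> [F1 F2] [G1 G2]; rewrite /ccontinuous.
have -> : (fun t => complex.Re ((F \+ G) t)) =
    (fun t => complex.Re (F t) + complex.Re (G t)).
  by apply: funext => t /=; case: (F t) (G t) => [? ?] [? ?].
have -> : (fun t => complex.Im ((F \+ G) t)) =
    (fun t => complex.Im (F t) + complex.Im (G t)).
  by apply: funext => t /=; case: (F t) (G t) => [? ?] [? ?].
by split => t; [exact: continuousD (F1 t) (G1 t) | exact: continuousD (F2 t) (G2 t)].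
Qed.

Lemma ccontinuousM F G : ccontinuous F -> ccontinuous G -> ccontinuous (F \* G).
Proof.
move=> [F1 F2] [G1 G2]; rewrite /ccontinuous.
have -> : (fun t => complex.Re ((F \* G) t)) =
    (fun t => complex.Re (F t) * complex.Re (G t) - complex.Im (F t) * complex.Im (G t)).
  by apply: funext => t /=; case: (F t) (G t) => [? ?] [? ?].
have -> : (fun t => complex.Im ((F \* G) t)) =
    (fun t => complex.Re (F t) * complex.Im (G t) + complex.Im (F t) * complex.Re (G t)).
  by apply: funext => t /=; case: (F t) (G t) => [? ?] [? ?].
split => t.
  exact: continuousB (continuousM (F1 t) (G1 t)) (continuousM (F2 t) (G2 t)).
exact: continuousD (continuousM (F1 t) (G2 t)) (continuousM (F2 t) (G1 t)).
Qed.

Lemma ccontinuousV F : ccontinuous F -> (forall t, F t != 0) ->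
  ccontinuous (fun t => (F t)^-1).
Proof.
move=> [F1 F2] F_neq0; rewrite /ccontinuous.
pose N t := complex.Re (F t) ^+ 2 + complex.Im (F t) ^+ 2.
have N_neq0 t : N t != 0.
  move: (F_neq0 t); rewrite /N; case: (F t) => a b /=; apply: contraNneq.
  by move/eqP; rewrite paddr_eq0 ?sqr_ge0 // !sqrf_eq0 => /andP[/eqP-> /eqP->].
have NV t : {for t, continuous (fun t => (N t)^-1)}.
  apply: continuousV (N_neq0 t) _.
  exact: continuousD (continuousM (F1 t) (F1 t)) (continuousM (F2 t) (F2 t)).
have -> : (fun t => complex.Re (F t)^-1) = (fun t => complex.Re (F t) * (N t)^-1).
  by apply: funext => t; rewrite /N; case: (F t).
have -> : (fun t => complex.Im (F t)^-1) = (fun t => - (complex.Im (F t) * (N t)^-1)).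
  by apply: funext => t; rewrite /N; case: (F t).
split => t; first exact: continuousM (F1 t) (NV t).
exact: continuousN (continuousM (F2 t) (NV t)).
Qed.

Lemma ccontinuous_sum (I : finType) (P : pred I) (F : I -> T -> R[i]) :
  (forall j, ccontinuous (F j)) -> ccontinuous (fun t => \sum_(j | P j) F j t).
Proof.
move=> Fc; rewrite unlock; elim: (index_enum I) => /= [|j l IHl].
  exact: ccontinuous_cst.
by case: (P j) => //; apply: ccontinuousD.
Qed.

Lemma ccontinuous_prod (I : finType) (F : I -> T -> R[i]) :
  (forall j, ccontinuous (F j)) -> ccontinuous (fun t => \prod_j F j t).
Proof.
move=> Fc; rewrite unlock; elim: (index_enum I) => /= [|j l IHl].
  exact: ccontinuous_cst.
exact: ccontinuousM.
Qed.

Lemma ccontinuous_comp (U : topologicalType) (F : U -> R[i]) (g : T -> U) :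
  ccontinuous F -> continuous g -> ccontinuous (fun t => F (g t)).
Proof.
move=> [F1 F2] gc; split => t; first exact: continuous_comp (gc t) (F1 (g t)).
exact: continuous_comp (gc t) (F2 (g t)).
Qed.

End ComplexContinuity.

Section Positions.
Variables (n : nat) (i : 'I_n).
Hypothesis hi : (i.+1 < n)%N.

Lemma nxtE : val (nxt i) = i.+1.
Proof. by rewrite /nxt val_insubd hi. Qed.

Lemma nxt_neq : (i == nxt i) = false.
Proof. by apply/negbTE; rewrite -val_eqE nxtE /= neq_ltn ltnSn. Qed.

Lemma sw_i : sw i i = nxt i.
Proof. by rewrite /sw eqxx. Qed.

Lemma sw_nxt : sw i (nxt i) = i.
Proof. by rewrite /sw eq_sym nxt_neq eqxx. Qed.

Lemma sw_other k : k != i -> k != nxt i -> sw i k = k.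
Proof. by rewrite /sw => /negbTE -> /negbTE ->. Qed.

Lemma swK : involutive (sw i).
Proof.
move=> k; case: (eqVneq k i) => [->|ki]; first by rewrite sw_i sw_nxt.
case: (eqVneq k (nxt i)) => [->|kn]; first by rewrite sw_nxt sw_i.
by rewrite !sw_other.
Qed.

Lemma sw_inj : injective (sw i).
Proof. exact: inv_inj swK. Qed.

Section Updates.
Variables (T : Type) (t : 'I_n -> T).

Lemma upd_pair_i a b : upd (upd t i a) (nxt i) b i = a.
Proof. by rewrite /upd nxt_neq eqxx. Qed.

Lemma upd_pair_nxt a b : upd (upd t i a) (nxt i) b (nxt i) = b.
Proof. by rewrite /upd eqxx. Qed.

Lemma upd_pair_upd_pair a b a' b' :
  upd (upd (upd (upd t i a) (nxt i) b) i a') (nxt i) b' = upd (upd t i a') (nxt i) b'.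
Proof. by apply: funext => k; rewrite /upd; case: (k == nxt i); case: (k == i). Qed.

Lemma upd_pair_id : upd (upd t i (t i)) (nxt i) (t (nxt i)) = t.
Proof.
apply: funext => k; rewrite /upd.
by case: (eqVneq k (nxt i)) => [->//|_]; case: (eqVneq k i) => [->|].
Qed.

End Updates.

Lemma ins2_i (T : Type) m (ys : 'I_m -> T) v : ins2 i ys v i = v.
Proof. by rewrite /ins2 ltnn leqnSn. Qed.

Lemma ins2_nxt (T : Type) m (ys : 'I_m -> T) v : ins2 i ys v (nxt i) = v.
Proof. by rewrite /ins2 nxtE ltnNge leqnSn /= leqnn. Qed.

Lemma ins2_other (T : Type) (ys : 'I_(n - 2) -> T) v w k :
  k != i -> k != nxt i -> ins2 i ys v k = ins2 i ys w k.
Proof.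
rewrite -!val_eqE nxtE /= /ins2 /ext => /eqP ki /eqP kn; have := ltn_ord k.
by case: ifP => ? ?; [|case: ifP => ? //; first lia]; case: insubP => //=; lia.
Qed.

Lemma ins2_sw (T : Type) (ys : 'I_(n - 2) -> T) v : ins2 i ys v \o sw i = ins2 i ys v.
Proof.
apply: funext => k /=.
case: (eqVneq k i) => [->|ki]; first by rewrite sw_i ins2_nxt ins2_i.
case: (eqVneq k (nxt i)) => [->|kn]; first by rewrite sw_nxt ins2_nxt ins2_i.
by rewrite sw_other.
Qed.

Lemma rem2_sw (T : Type) (s : 'I_n -> T) : rem2 i (s \o sw i) = rem2 i s.
Proof.
apply: funext => k; have kn := ltn_ord k.
have hq : ((if (k < i)%N then (k : nat) else k.+2) < n)%N by case: ifP => _; lia.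
rewrite /rem2 /= sw_other // -val_eqE ?nxtE val_insubd hq; case: ifP => /= ?; lia.
Qed.

End Positions.

Section TensorOperators.
Variables (R : realType) (r n : nat) (i : 'I_n).
Hypothesis hi : (i.+1 < n)%N.
Implicit Types (A B M : op2 R r) (t : tens R r n) (c : R[i]).

Lemma op_at_mul A B t : op_at i A (op_at i B t) = op_at i (op_mul A B) t.
Proof.
apply: funext => idx; rewrite /op_at /op_mul.
under eq_bigr => u _.
  rewrite upd_pair_i // upd_pair_nxt // -surjective_pairing.
  under eq_bigr => w _ do rewrite upd_pair_upd_pair.
  rewrite mulr_sumr; over.
rewrite exchange_big /=; apply: eq_bigr => w _.
by rewrite mulr_suml; apply: eq_bigr => u _; rewrite mulrA.
Qed.

Lemma op_at_id t : op_at i (@op_id R r) t = t.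
Proof.
apply: funext => idx; rewrite /op_at /op_id (bigD1 (idx i, idx (nxt i))) //=.
rewrite eqxx mul1r upd_pair_id big1 ?addr0 // => u.
by rewrite eq_sym => /negbTE ->; rewrite mul0r.
Qed.

Lemma op_atZ A c t : op_at i A (fun idx => c * t idx) = (fun idx => c * op_at i A t idx).
Proof.
by apply: funext => idx; rewrite /op_at mulr_sumr; apply: eq_bigr => u _; rewrite mulrCA.
Qed.

(* Both sides are traces of the slice of t through the factors i, i+1, the
   other indices being fixed to jdx. *)
Lemma Tr_at_op_at M c t :
  (forall v, trace2 (op_app2 M v) = c * trace2 v) ->
  Tr_at i (op_at i M t) = (fun jdx => c * Tr_at i t jdx).
Proof.
move=> Mc; apply: funext => jdx.
pose ins_pair u := upd (upd (ins2 i jdx u.1) i u.1) (nxt i) u.2.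
have ins_pairE k u : upd (upd (ins2 i jdx k) i u.1) (nxt i) u.2 = ins_pair u.
  apply: funext => q; rewrite /ins_pair /upd.
  case: (eqVneq q (nxt i)) => // qn; case: (eqVneq q i) => // qi.
  exact: ins2_other.
have -> : Tr_at i t jdx = trace2 (fun u => t (ins_pair u)).
  apply: eq_bigr => k _; rewrite /ins_pair /=.
  by have := upd_pair_id i (ins2 i jdx k); rewrite ins2_i ins2_nxt // => ->.
rewrite -Mc; apply: eq_bigr => k _.
by rewrite /op_at ins2_i ins2_nxt //; apply: eq_bigr => u _; rewrite ins_pairE.
Qed.

End TensorOperators.

Section Kernels.
Variables (R : realType) (d r : nat).

Definition kscale n (c : R[i]) (f : kern R d r n) : kern R d r n :=
  fun xs idx => c * f xs idx.

Variables (n : nat) (i : 'I_n).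
Hypothesis hi : (i.+1 < n)%N.
Implicit Types (A B : R -> R -> op2 R r) (f : kern R d r n) (c : R[i]).

Lemma swapkK A B f :
  (forall y1 y2, op_mul (A y1 y2) (B y2 y1) = @op_id R r) -> swapk i A (swapk i B f) = f.
Proof.
move=> AB; apply: funext => xs; rewrite /swapk sw_i // sw_nxt //.
have -> : (fun k => xs (sw i (sw i k))) = xs by apply: funext => k; rewrite swK.
by rewrite op_at_mul // AB op_at_id.
Qed.

Lemma swapk_kscale B c f : swapk i B (kscale c f) = kscale c (swapk i B f).
Proof. by apply: funext => xs; rewrite /swapk /kscale op_atZ. Qed.

(* On the diagonal x_i = x_{i+1} = x the swap is invisible, so only the trace
   of B(y, y) enters the contraction kernel. *)
Lemma gker_swapk B c f :
  (forall y v, trace2 (op_app2 (B y y) v) = c * trace2 v) ->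
  gker i (swapk i B f) = gker i (kscale c f).
Proof.
move=> Bc; apply: funext => ys; apply: funext => jdx; rewrite /gker /swapk.
apply: congr1; apply: funext => x.
have := ins2_sw hi ys x; rewrite /comp => ->.
by rewrite ins2_i ins2_nxt // (Tr_at_op_at hi _ (Bc _)) /Tr_at /kscale mulr_sumr.
Qed.

End Kernels.

Section FunctionSpace.
Local Open Scope classical_set_scope.

Lemma compact_closure_preimage (T : topologicalType) (g : T -> T) (A B : set T) :
  continuous g -> involutive g -> A `<=` g @^-1` B ->
  compact (closure B) -> compact (closure A).
Proof.
move=> gc gK AB cB.
have closed_pre : closed (g @^-1` closure B).
  exact: (proj1 (continuous_closedP _) gc) (@closed_closure _ _).
have pre_img : g @^-1` closure B = g @` closure B.
  apply/seteqP; split => y /=; first by move=> ?; exists (g y); rewrite ?gK.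
  by move=> [x ? <-]; rewrite gK.
apply: (subclosed_compact (@closed_closure _ _) (B := g @^-1` closure B)).
  by rewrite pre_img; apply: continuous_compact => //; apply: continuous_subspaceT.
rewrite [X in _ `<=` X](proj1 (closure_id _) closed_pre).
by apply: closureS => y /AB; exact: (@subset_closure _ B (g y)).
Qed.

Variables (R : realType) (d r : nat).

Lemma colsub_continuous n (p : 'I_n -> 'I_n) : continuous (colsub p : 'rV[R]_n -> 'rV[R]_n).
Proof.
move=> y A /nbhs_ballP [e e0 eA]; apply/nbhs_ballP; exists e => // z yz; apply: eA.
by move: yz => -[e1 yz]; split => // a b; rewrite !mxE; apply: yz.
Qed.

Lemma pair_coord_continuous n (a b : 'I_n) :
  continuous (fun y : 'rV[R]_n => (y 0 a, y 0 b)).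
Proof.
move=> y; apply: (@cvg_pair _ _ _ (nbhs y) (nbhs (y 0 a)) (nbhs (y 0 b)));
  exact: coord_continuous.
Qed.

Definition swap_profile n (i : 'I_n) (B : R -> R -> op2 R r) (phi : 'rV[R]_n -> tens R r n)
    : 'rV[R]_n -> tens R r n :=
  fun y => op_at i (B (y 0 i) (y 0 (nxt i))) (phi (colsub (sw i) y)).

Lemma C0fun_swap_profile n (i : 'I_n) B phi : (i.+1 < n)%N ->
  (forall p q, ccontinuous (fun t : R * R => B t.1 t.2 p q)) ->
  C0fun phi -> C0fun (swap_profile i B phi).
Proof.
move=> hi Bc [phic phiK]; split => [idx|].
  apply: ccontinuous_sum => u; apply: ccontinuousM.
    have := pair_coord_continuous (a := i) (b := nxt i).
    exact: ccontinuous_comp (Bc (idx i, idx (nxt i)) u).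
  have := colsub_continuous (p := sw i).
  exact: ccontinuous_comp (phic (upd (upd idx i u.1) (nxt i) u.2)).
apply: (compact_closure_preimage (g := colsub (sw i))) phiK.
- exact: colsub_continuous.
- by move=> y; apply/rowP => k; rewrite !mxE swK.
move=> y [idx]; apply: contraPP => /forallNP phi0; apply/negP/negPn/eqP.
rewrite /swap_profile /op_at big1 // => u _.
by have /negP/negPn/eqP -> := phi0 (upd (upd idx i u.1) (nxt i) u.2); rewrite mulr0.
Qed.

Lemma C0fun_scale n (c : R[i]) (phi : 'rV[R]_n -> tens R r n) :
  C0fun phi -> C0fun (fun y idx => c * phi y idx).
Proof.
move=> [phic phiK]; split => [idx|].
  exact: ccontinuousM (ccontinuous_cst _ _) (phic idx).
apply: (compact_closure_preimage (g := id)) phiK => // [|y [idx]].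
  by move=> y; apply: cvg_id.
apply: contraPP => /forallNP phi0; apply/negP/negPn/eqP.
by have /negP/negPn/eqP -> := phi0 idx; rewrite mulr0.
Qed.

Lemma Fspace_swapk n (i : 'I_n) (B : R -> R -> op2 R r) (f : kern R d r n) :
  (i.+1 < n)%N -> (forall p q, ccontinuous (fun t : R * R => B t.1 t.2 p q)) ->
  Fspace f -> Fspace (swapk i B f).
Proof.
move=> hi Bc [m [phis [gss [Hj ->]]]].
exists m, (fun j => swap_profile i B (phis j)), (fun j k => gss j (sw i k)); split.
  by move=> j; split=> [|k]; [apply: C0fun_swap_profile (Hj j).1 | apply: (Hj j).2].
apply: funext => xs; apply: funext => idx.
rewrite /swapk /op_at /elem /swap_profile /op_at !mxE.
have -> : colsub (sw i) (\row_k (xs k).1) = \row_k (xs (sw i k)).1.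
  by apply/rowP => k; rewrite !mxE.
under eq_bigr => u _ do rewrite mulr_sumr.
rewrite exchange_big /=; apply: eq_bigr => j _.
rewrite mulr_suml (reindex_inj (sw_inj hi)) /=.
by apply: eq_bigr => u _; rewrite -mulrA; under eq_bigr do rewrite (swK hi).
Qed.

Lemma Fspace_kscale n (c : R[i]) (f : kern R d r n) : Fspace f -> Fspace (kscale c f).
Proof.
move=> [m [phis [gss [Hj ->]]]].
exists m, (fun j y idx => c * phis j y idx), gss; split.
  by move=> j; split; [apply: C0fun_scale (Hj j).1 | apply: (Hj j).2].
apply: funext => xs; apply: funext => idx.
by rewrite /kscale /elem mulr_sumr; apply: eq_bigr => j _; rewrite mulrA.
Qed.

End FunctionSpace.

Section MatrixContinuity.
Variables (R : realType) (T : topologicalType).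

Lemma ccontinuous_det m (M : T -> 'M[R[i]]_m) :
  (forall a b, ccontinuous (fun t => M t a b)) -> ccontinuous (fun t => \det (M t)).
Proof.
move=> Mc; apply: ccontinuous_sum => s; apply: ccontinuousM; first exact: ccontinuous_cst.
by apply: ccontinuous_prod => k; apply: Mc.
Qed.

Lemma ccontinuous_adj m (M : T -> 'M[R[i]]_m) a b :
  (forall a b, ccontinuous (fun t => M t a b)) -> ccontinuous (fun t => \adj (M t) a b).
Proof.
move=> Mc; under [X in ccontinuous X]funext => t do rewrite mxE /cofactor.
apply: ccontinuousM; first exact: ccontinuous_cst.
by apply: ccontinuous_det => x y; under [X in ccontinuous X]funext => t do rewrite !mxE.
Qed.

Lemma ccontinuous_invmx m (M : T -> 'M[R[i]]_m) a b :
  (forall t, M t \in unitmx) -> (forall a b, ccontinuous (fun t => M t a b)) ->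
  ccontinuous (fun t => invmx (M t) a b).
Proof.
move=> Mu Mc; under [X in ccontinuous X]funext => t do rewrite /invmx Mu mxE.
apply: ccontinuousM; last exact: ccontinuous_adj.
apply: ccontinuousV; first exact: ccontinuous_det.
by move=> t; rewrite -unitfE -unitmxE.
Qed.

End MatrixContinuity.

Section OperatorMatrices.
Variables (R : realType) (r : nat).
Local Notation N := #|{: 'I_r * 'I_r}|.

Definition op_mx (A : op2 R r) : 'M[R[i]]_N := \matrix_(a, b) A (enum_val a) (enum_val b).

Lemma op_mxE A p q : A p q = op_mx A (enum_rank p) (enum_rank q).
Proof. by rewrite mxE !enum_rankK. Qed.

Lemma op_mxM A B : op_mx (op_mul A B) = op_mx A *m op_mx B.
Proof.
apply/matrixP => a b; rewrite !mxE /op_mul (reindex (@enum_val _ (mem {: 'I_r * 'I_r}))) /=.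
  by apply: eq_bigr => k _; rewrite !mxE.
by exists enum_rank => x _; [exact: enum_valK | exact: enum_rankK].
Qed.

Lemma op_mx_id : op_mx (@op_id R r) = 1%:M.
Proof. by apply/matrixP => a b; rewrite !mxE /op_id (inj_eq enum_val_inj). Qed.

(* A right inverse is the matrix inverse, given entrywise by the adjugate
   formula. *)
Lemma ccontinuous_op_rinv (T : topologicalType) (A Ainv : T -> op2 R r) :
  (forall t, op_mul (A t) (Ainv t) = @op_id R r) ->
  (forall p q, ccontinuous (fun t => A t p q)) ->
  forall p q, ccontinuous (fun t => Ainv t p q).
Proof.
move=> AAinv Ac p q.
have AM t : op_mx (A t) *m op_mx (Ainv t) = 1%:M by rewrite -op_mxM AAinv op_mx_id.
have Au t : op_mx (A t) \in unitmx by case: (mulmx1_unit (AM t)).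
have -> : (fun t => Ainv t p q) =
    (fun t => invmx (op_mx (A t)) (enum_rank p) (enum_rank q)).
  by apply: funext => t; rewrite op_mxE -[op_mx (Ainv t)](mulKmx (Au t)) AM mulmx1.
apply: ccontinuous_invmx => // a b.
by under [X in ccontinuous X]funext => t do rewrite mxE; apply: Ac.
Qed.

End OperatorMatrices.

Section QMCRModel.
Variables (R : realType) (d r : nat) (Q : R -> R -> op2 R r).
Variables (A : lalgType R[i]) (star : A -> A).
Variable Phi : forall n : nat, kern R d r n -> ('I_n -> bool) -> A.
Arguments Phi : clear implicits.
Hypotheses (HQ : Q_assumptions Q) (HA : QMCR_model Q star Phi).

Lemma ccontinuous_Qt p q : ccontinuous (fun t : R * R => Qt Q t.1 t.2 p q).
Proof. exact: HQ.1. Qed.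

Lemma ccontinuous_Qt_swap p q : ccontinuous (fun t : R * R => Qt Q t.2 t.1 p q).
Proof. exact: ccontinuous_comp (ccontinuous_Qt p q) swap_continuous. Qed.

Lemma Phi_kscale n (c : R[i]) (f : kern R d r n) s :
  Fspace f -> Phi n (kscale c f) s = c *: Phi n f s.
Proof.
have [_ [_ [_ [_ [Phi_lin _]]]]] := HA.
move=> Ff; have -> : kscale c f = (fun xs idx => c * f xs idx + 0 * f xs idx).
  by apply: funext => xs; apply: funext => idx; rewrite mul0r addr0.
by rewrite Phi_lin // scale0r addr0.
Qed.

(* The contraction kernel need not lie in F^(n-2), so Phi cannot be pulled
   through it by linearity; the (-,+) relation transfers linearity from the
   other two terms, which do lie in F^(n). *)
Lemma Phi_gker_kscale n (i : 'I_n) (c : R[i]) (f : kern R d r n) s :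
  (i.+1 < n)%N -> ~~ s i -> s (nxt i) -> Fspace f ->
  Phi (n - 2) (gker i (kscale c f)) (rem2 i s) = c *: Phi (n - 2) (gker i f) (rem2 i s).
Proof.
have [_ [_ [_ [_ [_ [_ [_ [_ [_ [_ Phi_mp]]]]]]]]]] := HA.
move=> hi si snxt Ff; set B := fun y1 y2 => Qt Q y2 y1.
have Fsf : Fspace (swapk i B f) := Fspace_swapk hi ccontinuous_Qt_swap Ff.
have Fcf : Fspace (kscale c f) := Fspace_kscale c Ff.
apply: (addrI (Phi n (swapk i B (kscale c f)) (fun k => s (sw i k)))).
rewrite -(Phi_mp n i (kscale c f) s) // Phi_kscale // swapk_kscale Phi_kscale //.
by rewrite (Phi_mp n i f s) // scalerDr.
Qed.

End QMCRModel.

(* Sign convention: true = "+", false = "-".  Positions are 0-based: the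
   theorem's i : 'I_n corresponds to the paper's index i+1. *)
Theorem proposition2p3 (R : realType) (d r : nat) (hd : (2 <= d)%N)
    (Q : R -> R -> op2 R r) (HQ : Q_assumptions Q)
    (Qtinv : R -> R -> op2 R r)
    (HQtinv : forall y1 y2 : R,
        op_mul (Qt Q y1 y2) (Qtinv y1 y2) = @op_id R r /\
        op_mul (Qtinv y1 y2) (Qt Q y1 y2) = @op_id R r)
    (kappa : R)
    (Hkappa : forall (y : R) (v : ('I_r * 'I_r)%type -> R[i]),
        trace2 (op_app2 (Qtinv y y) v) = (kappa%:C)%C * trace2 v)
    (A : lalgType R[i]) (star : A -> A)
    (Phi : forall n : nat, kern R d r n -> ('I_n -> bool) -> A)
    (HA : QMCR_model Q star Phi)
    (n : nat) (i : 'I_n) (s : 'I_n -> bool) (f : kern R d r n) :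
  (i.+1 < n)%N -> s i = true -> s (nxt i) = false -> Fspace f ->
  Phi n f s =
    Phi n (swapk i Qtinv f) (fun k => s (sw i k))
    - (kappa%:C)%C *: Phi (n - 2)%N (gker i f) (rem2 i s).
Proof.
have [_ [_ [_ [_ [_ [_ [_ [_ [_ [_ Phi_mp]]]]]]]]]] := HA.
move=> hi si snxt Ff; set s' := fun k => s (sw i k).
have Qtinv_c : forall p q, ccontinuous (fun t : R * R => Qtinv t.1 t.2 p q).
  exact: ccontinuous_op_rinv (fun t => (HQtinv t.1 t.2).1) (ccontinuous_Qt HQ).
have Fh : Fspace (swapk i Qtinv f) := Fspace_swapk hi Qtinv_c Ff.
have s'i : ~~ s' i by rewrite /s' sw_i snxt.
have s'nxt : s' (nxt i) by rewrite /s' sw_nxt // si.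
have s'K : (fun k => s' (sw i k)) = s by apply: funext => k; rewrite /s' swK.
have := Phi_mp n i _ s' hi s'i s'nxt Fh.
rewrite swapkK // => [|y1 y2]; last exact: (HQtinv y2 y1).1.
rewrite (gker_swapk hi _ Hkappa) (Phi_gker_kscale HQ HA) // s'K (rem2_sw hi s) => ->.
by rewrite addrK.
Qed.
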